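(* Let $G$ be a pro-$p$ group such that all quotients $\gamma_i(G)/\gamma_{i+1}(G)$ of its lower central series are torsion-free, and let $\varphi$ be an automorphism of $G$ of finite order that acts trivially on the abelianization $G/[G,G]$. Then $\varphi$ is the identity.
   Context: For a pro-$p$ group $G$, $\gamma_1(G)=G$ and $\gamma_{i+1}(G)=\overline{[\gamma_i(G),G]}$ (closed subgroups) denote the terms of the lower central series; $[G,G]$ denotes the closed commutator subgroup. *)

From mathcomp Require Import all_boot all_order.
From mathcomp Require Import all_classical all_reals all_analysis.
Set Implicit Arguments. Unset Strict Implicit. Unset Printing Implicit Defensive.
Local Open Scope classical_set_scope.

Section ProP.
Variable T : topologicalType.
Variables (mul : T -> T -> T) (inv : T -> T) (one : T).

Definition group_axioms : Prop :=
  [/\ forall x y z, mul x (mul y z) = mul (mul x y) z,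
      forall x, mul one x = x, forall x, mul x one = x,
      forall x, mul (inv x) x = one & forall x, mul x (inv x) = one].

Definition topological_group : Prop :=
  [/\ group_axioms,
      continuous (fun z : T * T => mul z.1 z.2),
      continuous inv & hausdorff_space T].

Definition is_subgroup (H : set T) : Prop :=
  [/\ H one, forall x y, H x -> H y -> H (mul x y) & forall x, H x -> H (inv x)].

Definition is_normal_subgroup (N : set T) : Prop :=
  is_subgroup N /\ forall g x, N x -> N (mul (mul (inv g) x) g).

Definition has_index (N : set T) (m : nat) : Prop :=
  exists r : 'I_m -> T, forall x, exists! i : 'I_m, N (mul (inv (r i)) x).

Definition pro_p_group (p : nat) : Prop :=
  [/\ prime p, topological_group, compact [set: T],
      totally_disconnected [set: T] &
      forall N, open N -> is_normal_subgroup N -> exists k, has_index N (p ^ k)].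

Definition gen (S : set T) : set T :=
  \bigcap_(H in [set H | is_subgroup H /\ S `<=` H]) H.

Definition commg (x y : T) : T := mul (mul (inv x) (inv y)) (mul x y).

Definition ccomm (A B : set T) : set T :=
  closure (gen [set commg a b | a in A & b in B]).

Fixpoint lcs_aux (n : nat) : set T :=
  if n is n'.+1 then ccomm (lcs_aux n') [set: T] else [set: T].

(* gamma i = gamma_i(G) for i >= 1 (gamma 1 = G, gamma 2 = [G,G]) *)
Definition gamma (i : nat) : set T := lcs_aux i.-1.

Definition gpow (x : T) (n : nat) : T := iter n (mul x) one.

Definition lcs_quotients_torsion_free : Prop :=
  forall i, (0 < i)%N -> forall x, gamma i x ->
    forall n, (0 < n)%N -> gamma i.+1 (gpow x n) -> gamma i.+1 x.

Definition is_automorphism (phi : T -> T) : Prop :=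
  [/\ forall x y, phi (mul x y) = mul (phi x) (phi y),
      continuous phi &
      exists psi : T -> T, [/\ cancel phi psi, cancel psi phi & continuous psi]].

Definition finite_order (phi : T -> T) : Prop :=
  exists n, (0 < n)%N /\ forall x, iter n phi x = x.

Definition trivial_on_abelianization (phi : T -> T) : Prop :=
  forall x, gamma 2 (mul (inv x) (phi x)).

End ProP.

From Pilot Require Import Defs.
From mathcomp Require Import all_boot all_order all_fingroup all_solvable.
From mathcomp Require Import all_classical all_reals all_analysis.

(* Let c := x^-1 phi(x).  Induction on i shows that phi is trivial modulo
   gamma_(i+1).  If phi moves every element by gamma_i, then it moves each
   generator [y, g] of gamma_i (y in gamma_(i-1)) by gamma_(i+1), hence all of
   gamma_i, since the elements so moved form a closed subgroup.  Therefore
   phi^m(x) = x c^m modulo gamma_(i+1), and phi^N = id puts c^N, hence c by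
   torsion freeness, in gamma_(i+1).  So c lies in every gamma_i.  Finally a
   compact totally disconnected group is zero-dimensional, every clopen
   neighbourhood of 1 contains an open normal subgroup U, and gamma_i lies in U
   for large i because T / U is a finite p-group, hence nilpotent; so c = 1. *)

Set Implicit Arguments. Unset Strict Implicit. Unset Printing Implicit Defensive.
Local Open Scope classical_set_scope.

Lemma closure_sub_preimage (U V : topologicalType) (f : U -> V) (A : set U)
    (C : set V) :
  continuous f -> closed C -> A `<=` f @^-1` C -> closure A `<=` f @^-1` C.
Proof.
move=> cf cC AC; rewrite closureE; apply: smallest_sub => //.
exact: (iffLR (continuous_closedP f) cf).
Qed.

Section QuasiComponent.
Variable T : topologicalType.
Hypothesis cT : compact [set: T].

Definition quasi_component (x : T) : set T :=
  \bigcap_(D in [set D : set T | clopen D /\ D x]) D.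

Lemma quasi_component_closed x : closed (quasi_component x).
Proof. by apply: closed_bigI => D [[]]. Qed.

Lemma quasi_component_refl x : quasi_component x x.
Proof. by move=> D []. Qed.

(* By compactness of [~` W], finitely many clopen sets already suffice. *)
Lemma quasi_component_sub_open x (W : set T) : open W ->
  quasi_component x `<=` W -> exists D, [/\ clopen D, D x & D `<=` W].
Proof.
move=> oW QW.
pose F := filter_from [set D : set T | clopen D /\ D x]
  (fun D => [set E : set T | E `<=` D]).
have FF : Filter F.
  apply: filter_from_filter; first by exists setT; split => //; exact: clopenT.
  move=> D1 D2 [cD1 D1x] [cD2 D2x]; exists (D1 `&` D2).
    by split; [exact: clopenI | split].
  by move=> E ED; split => y /ED [].
have /compact_near_coveringP cW : compact (~` W).
  by apply: (subclosed_compact _ cT) => //; exact: open_closedC.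
have [D [cD Dx] DW] : F (fun E => ~` W `<=` (fun y => ~ E y)).
  apply: (cW _ F (fun E y => ~ E y) FF) => y nWy.
  have [D [cD Dx] nDy] : exists2 D, clopen D /\ D x & ~ D y.
    apply: contrapT => hy; apply/nWy/QW => D hD.
    by apply: contrapT => ?; apply: hy; exists D.
  exists (~` D, [set E | E `<=` D]); first split.
  - by apply: open_nbhs_nbhs; split => //; apply: closed_openC; case: cD.
  - by exists D.
  - by move=> [y' E] [/= nDy' ED] Ey'; apply/nDy'/ED.
exists D; split => // y Dy; apply: contrapT => nWy.
exact: (DW D (@subset_refl _ D) y nWy).
Qed.

Hypothesis hT : hausdorff_space T.

Lemma quasi_component_subl x (A1 A2 : set T) : closed A1 -> closed A2 ->
  A1 `&` A2 = set0 -> quasi_component x `<=` A1 `|` A2 -> A1 x ->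
  quasi_component x `<=` A1.
Proof.
move=> cA1 cA2 A12 QA A1x.
have sn : set_nbhs A1 (~` A2).
  apply/set_nbhsP; exists (~` A2); split => //; first exact: closed_openC.
  by move=> y A1y A2y; rewrite -[False]/(set0 y) -A12.
have [i /set_nbhsP [U [oU A1U Ui]] cli] := compact_normal hT cT cA1 sn.
have A2U y : A2 y -> ~ closure U y.
  by move=> A2y /(closureS Ui) /cli.
have [D [cD Dx DU]] : exists D, [/\ clopen D, D x & D `<=` U `|` ~` closure U].
  apply: quasi_component_sub_open.
    by apply: openU => //; apply: closed_openC; exact: closed_closure.
  by move=> y /QA [/A1U Uy|/A2U]; [left|right].
have DUE : D `&` U = D `&` closure U.
  apply/seteqP; split => y [Dy Uy]; split => //; first exact: subset_closure.
  by case: (DU y Dy).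
have QDU : quasi_component x `<=` D `&` U.
  move=> y; apply; split; last by split => //; exact: A1U.
  case: cD => oD clD; split; first exact: openI.
  by rewrite DUE; apply: closedI => //; exact: closed_closure.
move=> y Qy; have [_ /subset_closure Uy] := QDU y Qy.
by case: (QA y Qy) => // /A2U.
Qed.

Lemma quasi_component_connected x : connected (quasi_component x).
Proof.
set Q := quasi_component x; have Qx : Q x by exact: quasi_component_refl.
move=> B [b Bb] [C oC BC] [D cD BD].
have QDB y : Q y -> D y -> B y by rewrite BD.
have cQD : closed (Q `&` D).
  by apply: closedI => //; exact: quasi_component_closed.
have cQC : closed (Q `&` ~` C).
  by apply: closedI; [exact: quasi_component_closed | exact: open_closedC].
have QDC : (Q `&` D) `&` (Q `&` ~` C) = set0.
  apply/seteqP; split => // y [[Qy Dy] [_ nCy]].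
  by move: (QDB y Qy Dy); rewrite BC => -[].
have QU : Q `<=` (Q `&` D) `|` (Q `&` ~` C).
  move=> y Qy; have [Cy|] := pselect (C y); last by right.
  left; have : B y by rewrite BC.
  by rewrite BD => -[].
have [Bx|nBx] := pselect (B x).
  apply/seteqP; split; first by rewrite BC => y [].
  move=> y /(quasi_component_subl cQD cQC QDC QU) [|Qy Dy]; last exact: QDB.
  by move: Bx; rewrite BD => -[].
have QnC : Q `<=` Q `&` ~` C.
  apply: quasi_component_subl cQC cQD _ _ _; first by rewrite setIC.
    by rewrite setUC.
  by split => // Cx; apply: nBx; rewrite BC.
by move: Bb; rewrite BC => -[/QnC []].
Qed.

End QuasiComponent.

Lemma compact_totally_disconnected_zero_dimensional (T : topologicalType) :
  hausdorff_space T -> compact [set: T] -> totally_disconnected [set: T] ->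
  zero_dimensional T.
Proof.
move=> hT cT tdT x y /eqP xy; apply: contrapT => nD.
have Qy : quasi_component x y.
  move=> D [cD Dx]; apply: contrapT => nDy; apply: nD; by exists D.
have := connected_component_max (A := [set: T]) (@quasi_component_refl _ x)
  (fun _ _ => I) (quasi_component_connected cT hT (x := x)) Qy.
by rewrite (tdT x I) => /esym/xy.
Qed.

Section TopologicalGroup.
Variables (T : topologicalType) (mul : T -> T -> T) (inv : T -> T) (one : T).
Hypothesis TG : topological_group mul inv one.

Local Notation "x ** y" := (mul x y) (at level 40, left associativity).
Local Notation com := (Defs.commg mul inv).
Local Notation subgroup := (is_subgroup mul inv one).
Local Notation gen := (gen mul inv one).
(* [L n] is gamma_(n+1). *)
Local Notation L := (lcs_aux mul inv one).

Let GA : group_axioms mul inv one. Proof. by case: TG. Qed.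

Lemma mulgA x y z : x ** (y ** z) = x ** y ** z. Proof. by case: GA. Qed.
Lemma mul1g x : one ** x = x. Proof. by case: GA. Qed.
Lemma mulg1 x : x ** one = x. Proof. by case: GA. Qed.
Lemma mulVg x : inv x ** x = one. Proof. by case: GA. Qed.
Lemma mulgV x : x ** inv x = one. Proof. by case: GA. Qed.

Lemma mulKg x y : inv x ** (x ** y) = y.
Proof. by rewrite mulgA mulVg mul1g. Qed.
Lemma mulKVg x y : x ** (inv x ** y) = y.
Proof. by rewrite mulgA mulgV mul1g. Qed.
Lemma mulgK x y : x ** y ** inv y = x.
Proof. by rewrite -mulgA mulgV mulg1. Qed.

Lemma mulgI x y z : x ** y = x ** z -> y = z.
Proof. by move=> h; rewrite -(mulKg x y) h mulKg. Qed.

Lemma invg_uniq x y : x ** y = one -> y = inv x.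
Proof. by move=> h; apply: (@mulgI x); rewrite h mulgV. Qed.
Lemma invgK x : inv (inv x) = x.
Proof. by symmetry; apply: invg_uniq; rewrite mulVg. Qed.
Lemma invMg x y : inv (x ** y) = inv y ** inv x.
Proof. by symmetry; apply: invg_uniq; rewrite mulgA -(mulgA x) mulgV mulg1 mulgV. Qed.
Lemma invg1 : inv one = one.
Proof. by symmetry; apply: invg_uniq; rewrite mulg1. Qed.

Section Morphism.
Variable f : T -> T.
Hypothesis fM : {morph f : x y / x ** y}.

Lemma morph1 : f one = one.
Proof. by apply: (@mulgI (f one)); rewrite -fM !mulg1. Qed.
Lemma morphV x : f (inv x) = inv (f x).
Proof. by apply: invg_uniq; rewrite -fM mulgV morph1. Qed.
Lemma morph_commg a b : f (com a b) = com (f a) (f b).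
Proof. by rewrite /Defs.commg !fM !morphV. Qed.

End Morphism.

Definition conjug (g x : T) := inv g ** x ** g.

Lemma conjugM g : {morph conjug g : x y / x ** y}.
Proof. by move=> x y; rewrite /conjug !mulgA mulgK. Qed.

Lemma conjugMr g h x : conjug h (conjug g x) = conjug (g ** h) x.
Proof. by rewrite /conjug invMg !mulgA. Qed.

Lemma invg_commg a b : inv (com a b) = com b a.
Proof. by rewrite /Defs.commg !invMg !invgK !mulgA. Qed.

Definition conj_stable (S : set T) := forall g x, S x -> S (conjug g x).

Lemma subgroup1 H : subgroup H -> H one. Proof. by case. Qed.
Lemma subgroupM H : subgroup H -> forall x y, H x -> H y -> H (x ** y).
Proof. by case. Qed.
Lemma subgroupV H : subgroup H -> forall x, H x -> H (inv x).
Proof. by case. Qed.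

Lemma gen_subgroup S : subgroup (gen S).
Proof.
split.
- by move=> H [[]].
- by move=> x y hx hy H [hH SH]; apply: subgroupM => //; [apply: hx|apply: hy].
- by move=> x hx H [hH SH]; apply: subgroupV => //; apply: hx.
Qed.

Lemma sub_gen S : S `<=` gen S.
Proof. by move=> x Sx H [_]; apply. Qed.

Lemma gen_min S H : subgroup H -> S `<=` H -> gen S `<=` H.
Proof. by move=> hH SH x; apply. Qed.

Lemma preimage_subgroup f H : {morph f : x y / x ** y} -> subgroup H ->
  subgroup (f @^-1` H).
Proof.
move=> fM hH; split => /=.
- by rewrite morph1 //; exact: subgroup1.
- by move=> x y hx hy; rewrite fM; exact: subgroupM.
- by move=> x hx; rewrite morphV //; exact: subgroupV.
Qed.

Lemma gen_conj_stable S : conj_stable S -> conj_stable (gen S).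
Proof.
move=> hS g x; apply: (@gen_min S (conjug g @^-1` gen S)).
  exact: preimage_subgroup (@conjugM g) (gen_subgroup S).
by move=> y Sy; apply: sub_gen; exact: hS.
Qed.

Lemma continuousM (U : topologicalType) (f g : U -> T) :
  continuous f -> continuous g -> continuous (fun x => f x ** g x).
Proof.
move=> cf cg x; apply: continuous2_cvg; [|exact: cf|exact: cg].
by case: TG => _ cM _ _; exact: (cM (f x, g x)).
Qed.

Lemma continuousV (U : topologicalType) (f : U -> T) :
  continuous f -> continuous (fun x => inv (f x)).
Proof. by case: TG => _ _ cV _ cf x; apply: continuous_comp; [exact: cf|exact: cV]. Qed.

Lemma continuous_conjug : continuous (fun z : T * T => conjug z.1 z.2).
Proof.
apply: continuousM; last by move=> z; exact: cvg_fst.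
apply: continuousM; last by move=> z; exact: cvg_snd.
by apply: continuousV => z; exact: cvg_fst.
Qed.

Lemma continuous_lmul a : continuous (mul a).
Proof. by apply: continuousM => [x|x]; [exact: cvg_cst | exact: cvg_id]. Qed.

Lemma closure_subgroup H : subgroup H -> subgroup (closure H).
Proof.
move=> hH; have clH := @closed_closure _ H.
have HclH h : H h -> closure H `<=` mul h @^-1` closure H.
  move=> Hh; apply: closure_sub_preimage => //; first exact: continuous_lmul.
  by move=> y Hy; apply/subset_closure; exact: subgroupM.
split.
- by apply/subset_closure; exact: subgroup1.
- move=> x y clx cly.
  apply: (@closure_sub_preimage _ _ (mul^~ y) H (closure H)) clx => //.
    by apply: continuousM => [z|z]; [exact: cvg_id | exact: cvg_cst].
  by move=> z Hz; exact: HclH.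
- apply: (@closure_sub_preimage _ _ inv H (closure H)) => //.
    by apply: continuousV => z; exact: cvg_id.
  by move=> z Hz; apply/subset_closure; exact: subgroupV.
Qed.

Lemma closure_conj_stable S : conj_stable S -> conj_stable (closure S).
Proof.
move=> hS g; apply: (@closure_sub_preimage _ _ (conjug g) S (closure S)).
- have -> : conjug g = (fun z : T * T => conjug z.1 z.2) \o pair g by [].
  move=> x; apply: continuous_comp.
    by apply: cvg_pair; [exact: cvg_cst | exact: cvg_id].
  exact: continuous_conjug.
- exact: closed_closure.
- by move=> x Sx; apply/subset_closure; exact: hS.
Qed.

Lemma subgroup_open P : subgroup P -> nbhs one P -> open P.
Proof.
move=> hP nP; rewrite openE => z Pz.
have : nbhs z (mul (inv z) @^-1` P).
  by apply: continuous_lmul; rewrite mulVg.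
by apply: filterS => x /= Px; rewrite -(mulKVg z x); apply: subgroupM.
Qed.

(* The complement of an open subgroup is a union of its open cosets. *)
Lemma open_subgroup_closed P : subgroup P -> open P -> closed P.
Proof.
move=> hP oP; rewrite -[P]setCK; apply: open_closedC.
rewrite openE => z nPz.
have : nbhs z (mul (inv z) @^-1` P).
  apply: continuous_lmul; rewrite mulVg.
  by apply: open_nbhs_nbhs; split => //; exact: subgroup1.
apply: filterS => x /= Pzx Px; apply: nPz.
have -> : z = x ** inv (inv z ** x) by rewrite invMg invgK mulKVg.
by apply: subgroupM => //; exact: subgroupV.
Qed.

Lemma lcs_subgroup n : subgroup (L n).
Proof. by case: n => [|n] /=; [by [] | exact/closure_subgroup/gen_subgroup]. Qed.

Lemma lcs_closed n : closed (L n).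
Proof. by case: n => [|n] /=; [exact: closedT | exact: closed_closure]. Qed.

Lemma lcs_conj_stable n : conj_stable (L n).
Proof.
elim: n => [//|n IHn] /=; apply: closure_conj_stable; apply: gen_conj_stable.
move=> g _ [a La [b _ <-]]; rewrite (morph_commg (@conjugM g)).
by exists (conjug g a); [exact: IHn | exists (conjug g b)].
Qed.

Lemma lcs_commg n a b : L n a -> L n.+1 (com a b).
Proof. by move=> La; apply: subset_closure; apply: sub_gen; exists a => //; exists b. Qed.

Lemma lcsS n : L n.+1 `<=` L n.
Proof.
rewrite /= /ccomm closureE; apply: smallest_sub; first exact: lcs_closed.
apply: gen_min; first exact: lcs_subgroup.
move=> _ [a La [b _ <-]]; rewrite /Defs.commg -mulgA.
apply: subgroupM; [exact: lcs_subgroup | exact: subgroupV (lcs_subgroup n) _ La |].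
by rewrite mulgA -/(conjug b a); exact: lcs_conj_stable.
Qed.

Definition eqmod n u v := L n (inv u ** v).

Lemma eqmod_refl n u : eqmod n u u.
Proof. by rewrite /eqmod mulVg; exact: subgroup1 (lcs_subgroup n). Qed.

Lemma eqmod_sym n u v : eqmod n u v -> eqmod n v u.
Proof.
by move=> Luv; rewrite /eqmod -[u]invgK -invMg; exact: subgroupV (lcs_subgroup n) _ Luv.
Qed.

Lemma eqmod_trans n u v w : eqmod n u v -> eqmod n v w -> eqmod n u w.
Proof.
move=> Luv Lvw; rewrite /eqmod -(mulKVg v w) mulgA.
exact: subgroupM (lcs_subgroup n) _ _ Luv Lvw.
Qed.

Lemma eqmod_mull n w u v : eqmod n u v -> eqmod n (w ** u) (w ** v).
Proof. by rewrite /eqmod invMg -mulgA mulKg. Qed.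

Lemma lcs_central n c z : L n c -> eqmod n.+1 (c ** z) (z ** c).
Proof.
move=> Lc; rewrite /eqmod invMg -/(com z c) -invg_commg.
apply: (subgroupV (lcs_subgroup n.+1)); exact: lcs_commg.
Qed.

Lemma eqmod_swap n c u v : L n c -> eqmod n.+1 (u ** c ** v) (u ** v ** c).
Proof. by move=> Lc; rewrite -!mulgA; apply/eqmod_mull/lcs_central. Qed.

(* Move [a], [b] and their inverses to the right end, one factor at a time. *)
Lemma commg_eqmod n x g a b : L n a -> L n b ->
  eqmod n.+1 (com x g) (com (x ** a) (g ** b)).
Proof.
move=> La Lb.
have LV y : L n y -> L n (inv y) by exact: subgroupV (lcs_subgroup n) y.
have -> : com (x ** a) (g ** b) =
    inv a ** (inv x ** inv b ** inv g ** x ** a ** g ** b).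
  by rewrite /Defs.commg !invMg !mulgA.
apply: eqmod_sym; apply: eqmod_trans (lcs_central (LV _ La)) _.
have := eqmod_swap (u := inv x) (v := inv g ** x ** a ** g ** b ** inv a) (LV _ Lb).
rewrite !mulgA => /eqmod_trans; apply.
have := eqmod_swap (u := inv x ** inv g ** x) (v := g ** b ** inv a ** inv b) La.
rewrite !mulgA => /eqmod_trans; apply.
have := eqmod_swap (u := inv x ** inv g ** x ** g ** b) (v := inv b ** a) (LV _ La).
rewrite !mulgA !mulgK /Defs.commg !mulgA; exact.
Qed.

Section Automorphism.
Variable phi : T -> T.
Hypotheses (phiM : {morph phi : x y / x ** y}) (phiC : continuous phi).

Lemma displacement_subgroup H : subgroup H -> conj_stable H ->
  subgroup [set y | H (inv y ** phi y)].
Proof.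
move=> hH cjH; split => /=.
- by rewrite (morph1 phiM) invg1 mul1g; exact: subgroup1.
- move=> x y Hx Hy; rewrite phiM.
  have -> : inv (x ** y) ** (phi x ** phi y) =
      conjug y (inv x ** phi x) ** (inv y ** phi y).
    by rewrite /conjug invMg !mulgA mulgK.
  by apply: subgroupM => //; exact: cjH.
- move=> x Hx; rewrite (morphV phiM) invgK.
  have -> : x ** inv (phi x) = conjug (inv x) (inv (inv x ** phi x)).
    by rewrite /conjug invMg !invgK !mulgA mulgK.
  by apply: cjH; exact: subgroupV.
Qed.

Lemma displacement_lcs n : (forall g, L n.+1 (inv g ** phi g)) ->
  forall y, L n.+1 y -> L n.+2 (inv y ** phi y).
Proof.
move=> phin.
apply: (closure_sub_preimage (f := fun y => inv y ** phi y) (C := L n.+2)).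
- by apply: continuousM => //; apply: continuousV => y; exact: cvg_id.
- exact: lcs_closed.
apply: gen_min.
  exact: displacement_subgroup (lcs_subgroup n.+2) (@lcs_conj_stable n.+2).
move=> _ [x _ [g _ <-]] /=; rewrite (morph_commg phiM).
by have := commg_eqmod (x := x) (g := g) (phin x) (phin g); rewrite !mulKVg.
Qed.

Hypothesis tf : lcs_quotients_torsion_free mul inv one.
Variable N : nat.
Hypotheses (N_gt0 : (0 < N)%N) (phiN : forall x, iter N phi x = x).

(* With [c := inv g ** phi g], [iter m phi g] is [g] times an element
   congruent to [c ^+ m] modulo [L n.+2]; for [m = N] this puts [c ^+ N] in
   [L n.+2], hence [c] by torsion freeness. *)
Lemma displacement_lcsS n : (forall g, L n.+1 (inv g ** phi g)) ->
  forall g, L n.+2 (inv g ** phi g).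
Proof.
move=> phin g; set c := inv g ** phi g.
have phig : phi g = g ** c by rewrite /c mulKVg.
have iter_phi m : exists2 d, iter m phi g = g ** d &
    L n.+1 d /\ eqmod n.+2 d (gpow mul one c m).
  elim: m => [|m [d iterm [Ld dcm]]].
    exists one; first by rewrite mulg1.
    by split; [exact: subgroup1 (lcs_subgroup _) | exact: eqmod_refl].
  have phid : L n.+2 (inv d ** phi d) := displacement_lcs phin Ld.
  exists (c ** phi d); first by rewrite /= iterm phiM phig mulgA.
  split; last by apply: eqmod_mull; exact: eqmod_trans (eqmod_sym phid) dcm.
  apply: (subgroupM (lcs_subgroup n.+1) (phin g)).
  by rewrite -(mulKVg d (phi d)); exact (subgroupM (lcs_subgroup _) Ld (lcsS phid)).
have [d iterN [_ dcN]] := iter_phi N.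
have d1 : d = one by apply: (@mulgI g); rewrite -iterN phiN mulg1.
move: dcN; rewrite d1 /eqmod invg1 mul1g => cN.
exact (@tf n.+2 isT c (phin g) N N_gt0 cN).
Qed.

Lemma displacement_lcs_all : trivial_on_abelianization mul inv one phi ->
  forall n g, L n.+1 (inv g ** phi g).
Proof. by move=> phi1; elim=> [|n IHn] g; [exact: phi1 | exact: displacement_lcsS]. Qed.

End Automorphism.

Definition rstab (D : set T) : set T :=
  [set x | forall d, D d -> D (d ** x) /\ D (d ** inv x)].

Lemma rstab_subgroup D : subgroup (rstab D).
Proof.
split.
- by move=> d Dd; rewrite invg1 mulg1.
- move=> x y Dx Dy d Dd; rewrite invMg !mulgA.
  by split; [exact: (Dy _ (Dx _ Dd).1).1 | exact: (Dx _ (Dy _ Dd).2).2].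
- by move=> x Dx d Dd; rewrite invgK; split; [exact: (Dx d Dd).2 | exact: (Dx d Dd).1].
Qed.

Lemma rstab_sub D : D one -> rstab D `<=` D.
Proof. by move=> D1 x /(_ one D1) [+ _]; rewrite mul1g. Qed.

Section Compact.
Hypothesis cT : compact [set: T].

(* Tube lemma for [mul] on the compact set [D]. *)
Lemma rstab_nbhs D : clopen D -> nbhs one (rstab D).
Proof.
move=> [oD cD].
have /compact_near_coveringP cvD := subclosed_compact cD cT (@subsetT _ D).
have DW : \forall w \near one, forall d, D d -> D (d ** w).
  apply: (cvD _ _ (fun w d => D (d ** w))) => d Dd.
  case: TG => _ cM _ _; apply: (cM (d, one)).
  by rewrite mulg1; apply: open_nbhs_nbhs.
have DWV : \forall w \near one, forall d, D d -> D (d ** inv w).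
  have : inv @ one --> one by rewrite -{2}invg1; case: TG => _ _ cV _; exact: cV.
  by move/(_ _ DW).
by near=> w => d Dd; split; [exact: (near DW w) | exact: (near DWV w)].
Unshelve. all: end_near.
Qed.

(* Tube lemma for conjugation on the compact group: the conjugates of a small
   neighbourhood of [one] stay in [H]; they generate the required subgroup. *)
Lemma open_normal_subgroup_sub H : subgroup H -> nbhs one H ->
  exists N, [/\ open N, is_normal_subgroup mul inv one N & N `<=` H].
Proof.
move=> hH nH; have /compact_near_coveringP cvT := cT.
have conjH : \forall v \near one, [set: T] `<=` (fun g => H (conjug g v)).
  apply: (cvT _ _ (fun v g => H (conjug g v))) => g _.
  have Hg1 : nbhs (conjug g one) H by rewrite /conjug mulg1 mulVg.
  exact: (@continuous_conjug (g, one) H Hg1).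
pose V := [set v | forall g, H (conjug g v)].
have nV : nbhs one V by apply: filterS conjH => v + g; apply.
pose N := gen [set conjug g v | g in [set: T] & v in V].
have VN : V `<=` N.
  move=> v Vv; apply: sub_gen; exists one => //; exists v => //.
  by rewrite /conjug invg1 mul1g mulg1.
exists N; split.
- exact: subgroup_open (gen_subgroup _) (filterS VN nV).
- split; first exact: gen_subgroup.
  apply: gen_conj_stable => h _ [g _ [v Vv <-]].
  by exists (g ** h) => //; exists v; rewrite // conjugMr.
- by apply: gen_min => // _ [g _ [v Vv <-]]; exact: Vv.
Qed.

Lemma open_normal_subgroup_sub_clopen D : clopen D -> D one ->
  exists N, [/\ open N, is_normal_subgroup mul inv one N & N `<=` D].
Proof.
move=> cD D1.
have [N [oN nN NR]] :=
  open_normal_subgroup_sub (rstab_subgroup D) (rstab_nbhs cD).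
by exists N; split => //; apply: subset_trans NR (rstab_sub D1).
Qed.

End Compact.

Section FiniteIndex.
Variables (N : set T) (m : nat) (r : 'I_m -> T).
Hypotheses (oN : open N) (nN : is_normal_subgroup mul inv one N).
Hypothesis r_transversal : forall x, exists! i : 'I_m, N (inv (r i) ** x).

Let sgN : subgroup N. Proof. by case: nN. Qed.

Let r_cover x : exists i, N (inv (r i) ** x).
Proof. by have [i [Ni _]] := r_transversal x; exists i. Qed.

Definition coset_index x : 'I_m := proj1_sig (cid (r_cover x)).

Lemma coset_indexP x : N (inv (r (coset_index x)) ** x).
Proof. exact: (proj2_sig (cid (r_cover x))). Qed.

Lemma coset_index_uniq x i : N (inv (r i) ** x) -> coset_index x = i.
Proof.
move=> Ni; have [i0 [_ uniq_i0]] := r_transversal x.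
by rewrite -(uniq_i0 _ Ni) (uniq_i0 _ (coset_indexP x)).
Qed.

Lemma coset_index_eq x y : N (inv x ** y) -> coset_index x = coset_index y.
Proof.
move=> Nxy; symmetry; apply: coset_index_uniq.
by rewrite -(mulKVg x y) mulgA; exact (subgroupM sgN (coset_indexP x) Nxy).
Qed.

Lemma coset_index_eqP x y : coset_index x = coset_index y -> N (inv x ** y).
Proof.
move=> exy; have -> : inv x ** y =
    inv (inv (r (coset_index x)) ** x) ** (inv (r (coset_index y)) ** y).
  by rewrite invMg invgK exy -mulgA mulKVg.
exact (subgroupM sgN (subgroupV sgN (coset_indexP x)) (coset_indexP y)).
Qed.

Lemma coset_index_rep i : coset_index (r i) = i.
Proof. by apply: coset_index_uniq; rewrite mulVg; exact: subgroup1. Qed.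

Lemma coset_act_inj g : injective (fun i => coset_index (inv g ** r i)).
Proof.
move=> i j /coset_index_eqP; rewrite invMg invgK -mulgA mulKVg => Nij.
by rewrite -(coset_index_rep i) -(coset_index_rep j); exact: coset_index_eq.
Qed.

(* [T / N] realised as a permutation group of the cosets [r i ** N]. *)
Definition coset_perm g : {perm 'I_m} := perm (@coset_act_inj g).

Lemma coset_permM g h : coset_perm (g ** h) = (coset_perm g * coset_perm h)%g.
Proof.
apply/permP => i; rewrite permM !permE; apply: coset_index_eq.
set z := inv g ** r i.
have -> : inv (g ** h) ** r i = inv h ** z by rewrite /z invMg mulgA.
rewrite invMg invgK -mulgA mulKVg.
have -> : inv z ** r (coset_index z) = inv (inv (r (coset_index z)) ** z).
  by rewrite invMg invgK.
exact (subgroupV sgN (coset_indexP z)).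
Qed.

Lemma coset_perm1P g : coset_perm g = 1%g <-> N g.
Proof.
split=> [g1|Ng].
  pose r0 := r (coset_index one).
  have Nr0 : N r0.
    by have := subgroupV sgN (coset_indexP one); rewrite mulg1 invgK.
  have := congr1 (fun s : {perm 'I_m} => s (coset_index one)) g1.
  rewrite /= perm1 permE -{2}(coset_index_rep (coset_index one)) -/r0.
  move/coset_index_eqP; rewrite invMg invgK => Nr0g.
  have -> : g = r0 ** (inv r0 ** g ** r0) ** inv r0.
    by rewrite !mulgA mulgK mulgV mul1g.
  exact (subgroupM sgN (subgroupM sgN Nr0 Nr0g) (subgroupV sgN Nr0)).
apply/permP => i; rewrite perm1 permE -{2}(coset_index_rep i).
apply: coset_index_eq; rewrite invMg invgK.
by case: nN => _; apply.
Qed.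

Lemma coset_perm1 : coset_perm one = 1%g.
Proof. by apply/coset_perm1P; exact: subgroup1. Qed.

Lemma coset_permV g : coset_perm (inv g) = ((coset_perm g)^-1)%g.
Proof.
have := coset_permM g (inv g); rewrite mulgV coset_perm1 => gVg.
by rewrite -(monoid.mulKg (coset_perm g) (coset_perm (inv g))) -gVg monoid.mulg1.
Qed.

Lemma coset_perm_rep g : coset_perm (r (coset_index g)) = coset_perm g.
Proof.
have /coset_perm1P gr : N (inv g ** r (coset_index g)).
  by apply: coset_index_eqP; rewrite coset_index_rep.
by rewrite -(mulKVg g (r (coset_index g))) coset_permM gr monoid.mulg1.
Qed.

Definition coset_perm_group : {set {perm 'I_m}} := [set coset_perm (r i) | i : 'I_m].

Lemma mem_coset_perm_group g : coset_perm g \in coset_perm_group.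
Proof. by rewrite -coset_perm_rep; exact: imset_f. Qed.

Lemma coset_perm_group_set : group_set coset_perm_group.
Proof.
apply/group_setP; split; first by rewrite -coset_perm1; exact: mem_coset_perm_group.
move=> _ _ /imsetP [i _ ->] /imsetP [j _ ->].
by rewrite -coset_permM; exact: mem_coset_perm_group.
Qed.

Canonical coset_perm_groupType := Group coset_perm_group_set.

Lemma card_coset_perm_group : #|coset_perm_group| = m.
Proof.
rewrite card_imset ?card_ord // => i j /= rij.
have /coset_perm1P Nij : coset_perm (inv (r i) ** r j) = 1%g.
  by rewrite coset_permM coset_permV rij monoid.mulVg.
by rewrite -(coset_index_rep i) -(coset_index_rep j); exact: coset_index_eq.
Qed.

(* The preimage of ['L_j.+2] contains [N], so it is open, hence closed. *)
Lemma coset_perm_lcs j x :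
  L j x -> coset_perm x \in ('L_j.+1(coset_perm_group))%g.
Proof.
elim: j x => [|j IHj] x Ljx; first exact: mem_coset_perm_group.
pose P := [set y | coset_perm y \in ('L_j.+2(coset_perm_group))%g].
have sgP : subgroup P.
  split => [|y z|y]; rewrite /P /= ?coset_perm1 ?group1 //.
    by rewrite coset_permM; exact: groupM.
  by rewrite coset_permV groupV.
have oP : open P.
  apply: subgroup_open sgP _; apply: filterS (open_nbhs_nbhs (conj oN (subgroup1 sgN))).
  by move=> y /coset_perm1P y1; rewrite /P /= y1 group1.
move: x Ljx; apply: (@closure_sub_preimage _ _ id _ P).
- by move=> y; exact: cvg_id.
- exact (open_subgroup_closed sgP oP).
apply: gen_min sgP _ => _ [a La [b _ <-]].
rewrite /P /= /Defs.commg !coset_permM !coset_permV -monoid.mulgA.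
rewrite lcnSn; apply: mem_commg; [exact: IHj | exact: mem_coset_perm_group].
Qed.

End FiniteIndex.

(* The finite [p]-group [T / N] is nilpotent. *)
Lemma lcs_sub_normal_p_index N p k : open N -> is_normal_subgroup mul inv one N ->
  prime p -> has_index mul inv N (p ^ k) -> exists n, L n `<=` N.
Proof.
move=> oN nN pp [r r_transversal].
have [n Ln1] : exists n, ('L_n.+1(coset_perm_group nN r_transversal))%g = 1%g.
  apply/lcnP; apply: (@pgroup_nil _ p).
  by rewrite /pgroup card_coset_perm_group pnatX pnat_id.
exists n => x /(coset_perm_lcs oN nN r_transversal).
by rewrite Ln1 inE => /eqP /coset_perm1P.
Qed.

End TopologicalGroup.

Theorem lemma6p1 (T : topologicalType) (mul : T -> T -> T) (inv : T -> T) (one : T)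
  (p : nat) (phi : T -> T) :
  pro_p_group mul inv one p ->
  lcs_quotients_torsion_free mul inv one ->
  is_automorphism mul phi ->
  finite_order phi ->
  trivial_on_abelianization mul inv one phi ->
  forall x, phi x = x.
Proof.
move=> [pp TG cT tdT p_index] tf [phiM phiC _] [n [n_gt0 phin]] phi1 x.
set c := mul (inv x) (phi x).
suff c1 : c = one by rewrite -(mulKVg TG x (phi x)) -/c c1 (mulg1 TG).
apply: contrapT => c_neq1.
have hT : hausdorff_space T by case: TG.
have [D [cD D1 nDc]] : exists D, [/\ clopen D, D one & ~ D c].
  by apply: compact_totally_disconnected_zero_dimensional => //; apply/eqP => /esym.
have [N [oN nN ND]] := open_normal_subgroup_sub_clopen TG cT cD D1.
have [k N_index] := p_index N oN nN.
have [m LmN] := lcs_sub_normal_p_index TG oN nN pp N_index.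
apply/nDc/ND/LmN/(lcsS TG).
exact (displacement_lcs_all TG phiM phiC tf n_gt0 phin phi1 m (g := x)).
Qed.
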